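(* Let $n\ge 3$ and let $K_{1,n}^\sigma=(K_{1,n},\sigma)$ be a signed star that is non-homogeneous (it has at least one positive and at least one negative edge). Then $\dim(K_{1,n}^\sigma)=n-2$.
   Context: A signed graph $\Sigma=(G,\sigma)$ consists of a finite simple connected graph $G=(V,E)$ and a signature $\sigma:E\to\{+1,-1\}$; it is homogeneous if all edges have the same sign and non-homogeneous otherwise. For vertices $u,v$, $d(u,v)$ denotes the usual distance in $G$; the sign of a path $P$ is $\sigma(P)=\prod_{e\in P}\sigma(e)$. Set $\sigma_{\max}(uv)=-1$ if every shortest $u$–$v$ path has sign $-1$, and $\sigma_{\max}(uv)=+1$ otherwise; set $\sigma_{\min}(uv)=+1$ if every shortest $u$–$v$ path has sign $+1$, and $\sigma_{\min}(uv)=-1$ otherwise. $\Sigma$ is (distance) compatible if $\sigma_{\max}(uv)d(u,v)=\sigma_{\min}(uv)d(u,v)$ for all vertices $u,v$ (trees are always compatible); in that case the signed distance is $d_\Sigma(u,v)=\sigma_{\max}(uv)\,d(u,v)$. For a compatible $\Sigma$ and an ordered subset $W=(w_1,\dots,w_k)$ of $V$, the metric representation of $v\in V$ is $r_\Sigma(v|W)=(d_\Sigma(v,w_1),\dots,d_\Sigma(v,w_k))$. $W$ is a resolving set of $\Sigma$ if $r_\Sigma(u|W)\neq r_\Sigma(v|W)$ for all distinct $u,v\in V$; a basis is a resolving set of minimum cardinality, and that cardinality is the metric dimension $\dim(\Sigma)$. *)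

From mathcomp Require Import all_boot all_order all_algebra.
Set Implicit Arguments. Unset Strict Implicit. Unset Printing Implicit Defensive.
Import GRing.Theory Num.Theory.
Local Open Scope ring_scope.

(* A (finite, simple) graph on a finType T is given by a symmetric irreflexive
   adjacency relation e; a signature is a function sg : T -> T -> int giving the
   sign (+1 / -1) of the edge {u,v} (only its values on edges matter). *)

Definition is_walk {T : finType} (e : rel T) (x y : T) (p : seq T) : bool :=
  path e x p && (last x p == y).

(* Distance: least k such that a walk of length k from x to y exists
   (for connected graphs such a k < #|T| exists; default #|T| otherwise). *)
Definition gdist {T : finType} (e : rel T) (x y : T) : nat :=
  find (fun k => [exists p : k.-tuple T, is_walk e x y p]) (iota 0 #|T|).

Definition walk_sign {T : finType} (sg : T -> T -> int) (x : T) (p : seq T) : int :=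
  \prod_(pr <- zip (x :: p) p) sg pr.1 pr.2.

(* Shortest x--y paths are exactly the walks of length gdist e x y. *)
Definition sigma_max {T : finType} (e : rel T) (sg : T -> T -> int) (u v : T) : int :=
  if [forall p : (gdist e u v).-tuple T, is_walk e u v p ==> (walk_sign sg u p == -1)]
  then -1 else 1.

Definition sigma_min {T : finType} (e : rel T) (sg : T -> T -> int) (u v : T) : int :=
  if [forall p : (gdist e u v).-tuple T, is_walk e u v p ==> (walk_sign sg u p == 1)]
  then 1 else -1.

Definition compatible {T : finType} (e : rel T) (sg : T -> T -> int) : Prop :=
  forall u v : T, sigma_max e sg u v * (gdist e u v)%:Z = sigma_min e sg u v * (gdist e u v)%:Z.

(* Signed distance (meaningful for compatible signed graphs). *)
Definition signed_dist {T : finType} (e : rel T) (sg : T -> T -> int) (u v : T) : int :=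
  sigma_max e sg u v * (gdist e u v)%:Z.

Definition metric_rep {T : finType} (e : rel T) (sg : T -> T -> int) (v : T) (W : seq T)
  : seq int := [seq signed_dist e sg v w | w <- W].

(* W (an ordered subset of V, i.e. a duplicate-free sequence) is resolving. *)
Definition resolving {T : finType} (e : rel T) (sg : T -> T -> int) (W : seq T) : Prop :=
  uniq W /\ forall u v : T, u != v -> metric_rep e sg u W <> metric_rep e sg v W.

Definition is_metric_dim {T : finType} (e : rel T) (sg : T -> T -> int) (k : nat) : Prop :=
  (exists W : seq T, resolving e sg W /\ size W = k) /\
  (forall W : seq T, resolving e sg W -> (k <= size W)%N).

(* The star K_{1,n}: vertex None is the centre, Some i (i < n) are the leaves. *)
Definition star_adj (n : nat) : rel (option 'I_n) :=
  fun u v => (u == None) != (v == None).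

Definition star_sign {n : nat} (s : 'I_n -> int) (u v : option 'I_n) : int :=
  match u, v with
  | None, Some i => s i
  | Some i, None => s i
  | _, _ => 1
  end.
Arguments star_adj n : clear implicits.

From mathcomp Require Import all_boot all_order all_algebra.
From mathcomp Require Import zify.
Import GRing.Theory Num.Theory.
Local Open Scope ring_scope.

(* Signed distances in a star are read off from unique geodesics: a walk p0
   from x to y such that every walk from x to y of length at most |p0| is p0
   itself realises gdist x y, and then signed_dist x y = sign(p0) * |p0|.
   This gives, writing c for the centre and s i for the sign of the leaf i,
     d(x,x) = 0,   d(c,i) = d(i,c) = s i,   d(i,j) = 2 s i s j  (i <> j);
   in particular d(u,v) <> 0 for u <> v.

   Lower bound: two leaves of the same sign lying outside W are twins (they
   have equal representations), so a resolving set misses at most one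
   positive and one negative leaf, whence |W| >= n - 2.
   Upper bound: fix a positive leaf i0 and a negative leaf j0; the other
   n - 2 leaves resolve the star.  Vertices of W are singled out by their
   zero coordinate, and c, i0, j0 have the distinct coordinates s k, 2 s k,
   -2 s k at any leaf k of W, which exists since n >= 3. *)

Lemma walk_tupleP (T : finType) (e : rel T) (x y : T) (k : nat) :
  reflect (exists p : seq T, size p = k /\ is_walk e x y p)
          [exists p : k.-tuple T, is_walk e x y p].
Proof.
apply: (iffP existsP) => [[p Hp]|[p [<- Hp]]]; last by exists (in_tuple p).
by exists (val p); rewrite size_tuple.
Qed.

Lemma gdistE (T : finType) (e : rel T) (x y : T) (k : nat) :
  (k < #|T|)%N -> (exists p, size p = k /\ is_walk e x y p) ->
  (forall p : seq T, (size p < k)%N -> ~~ is_walk e x y p) -> gdist e x y = k.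
Proof.
move=> ltkT walk_k no_shorter; rewrite /gdist.
have -> : #|T| = (k + (#|T| - k).-1.+1)%N.
  by rewrite prednK ?subn_gt0 // subnKC // ltnW.
rewrite iotaD find_cat size_iota add0n /= ifN.
  by rewrite ifT ?addn0 //; apply/walk_tupleP.
apply/hasPn => m; rewrite mem_iota add0n => /andP[_ ltmk].
apply/walk_tupleP => -[p [sz_p walk_p]].
by move: (no_shorter p); rewrite sz_p ltmk walk_p => /(_ isT).
Qed.

Lemma signed_dist_geodesic (T : finType) (e : rel T) (sg : T -> T -> int)
    (x y : T) (p0 : seq T) :
  (size p0 < #|T|)%N -> is_walk e x y p0 ->
  (forall p, (size p <= size p0)%N -> is_walk e x y p -> p = p0) ->
  (walk_sign sg x p0 = 1 \/ walk_sign sg x p0 = -1) ->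
  signed_dist e sg x y = walk_sign sg x p0 * (size p0)%:Z.
Proof.
move=> ltp0T walk_p0 unique_p0 sign_p0.
have dist_p0 : gdist e x y = size p0.
  apply: gdistE => //; first by exists p0.
  move=> p ltp; apply/negP => /(unique_p0 p (ltnW ltp)) eq_p.
  by move: ltp; rewrite eq_p ltnn.
rewrite /signed_dist /sigma_max dist_p0; case: ifP => [all_neg | /negbT].
  by move/forallP: all_neg => /(_ (in_tuple p0)) /implyP /(_ walk_p0) /eqP ->.
case/forallPn => p; rewrite negb_imply => /andP[walk_p].
rewrite (unique_p0 p) ?size_tuple //.
by case: sign_p0 => ->; rewrite ?eqxx.
Qed.

Section SignedStar.
Variables (n : nat) (s : 'I_n -> int).
Hypothesis s_sign : forall i, s i = 1 \/ s i = -1.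

Local Notation sd := (signed_dist (star_adj n) (star_sign s)).

(* The star has n + 1 vertices, so geodesics of length <= 2 fit below #|T|. *)
Lemma card_star : #|{: option 'I_n}| = n.+1.
Proof. by rewrite card_option card_ord. Qed.

Lemma sd_self (x : option 'I_n) : sd x x = 0.
Proof.
rewrite (@signed_dist_geodesic _ _ _ _ _ [::]) ?mulr0 ?card_star //.
- by rewrite /is_walk /=.
- by case.
- by left; rewrite /walk_sign big_nil.
Qed.

Lemma sd_centre_leaf i : sd None (Some i) = s i.
Proof.
have sign_i : walk_sign (star_sign s) None [:: Some i] = s i.
  by rewrite /walk_sign /= big_cons big_nil mulr1.
rewrite (@signed_dist_geodesic _ _ _ _ _ [:: Some i]) ?sign_i ?mulr1
  ?card_star //.
- by rewrite ltnS (leq_ltn_trans _ (ltn_ord i)).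
- by rewrite /is_walk /=.
- by case=> [|a [|//]] _; rewrite /is_walk //= => /andP[_ /eqP->].
Qed.

Lemma sd_leaf_centre i : sd (Some i) None = s i.
Proof.
have sign_i : walk_sign (star_sign s) (Some i) [:: None] = s i.
  by rewrite /walk_sign /= big_cons big_nil mulr1.
rewrite (@signed_dist_geodesic _ _ _ _ _ [:: None]) ?sign_i ?mulr1
  ?card_star //.
- by rewrite ltnS (leq_ltn_trans _ (ltn_ord i)).
- by case=> [|a [|//]] _; rewrite /is_walk //= => /andP[_ /eqP->].
Qed.

Lemma sd_leaf_leaf i j : i != j -> sd (Some i) (Some j) = s i * s j * 2.
Proof.
move=> neq_ij.
have sign_ij : walk_sign (star_sign s) (Some i) [:: None; Some j] = s i * s j.
  by rewrite /walk_sign /= !big_cons big_nil mulr1.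
rewrite (@signed_dist_geodesic _ _ _ _ _ [:: None; Some j]) ?sign_ij //.
- by rewrite card_star /=; have := ltn_ord i; have := ltn_ord j;
    move: neq_ij; rewrite -val_eqE /=; lia.
- by rewrite /is_walk /=.
- case=> [|a [|b [|//]]] _; rewrite /is_walk /=.
  + by rewrite (inj_eq Some_inj) (negbTE neq_ij).
  + by case/andP=> adj /eqP eq_a; move: adj; rewrite eq_a.
  + by case/andP=> /andP[]; case: a => //= _ _ /eqP->.
- by case: (s_sign i) (s_sign j) => -> [] ->; rewrite ?mulr1 ?mulrN1; auto.
Qed.

Lemma sd_neq0 {u v : option 'I_n} : u != v -> sd u v != 0.
Proof.
have s_neq0 i : s i != 0 by case: (s_sign i) => ->.
case: u v => [i|] [j|] //= neq_uv.
- rewrite sd_leaf_leaf; last by apply: contraNneq neq_uv => ->.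
  by rewrite !mulf_neq0.
- by rewrite sd_leaf_centre.
- by rewrite sd_centre_leaf.
Qed.

Lemma twin_leaves (W : seq (option 'I_n)) i j :
  s i = s j -> Some i \notin W -> Some j \notin W ->
  metric_rep (star_adj n) (star_sign s) (Some i) W =
  metric_rep (star_adj n) (star_sign s) (Some j) W.
Proof.
move=> eq_s iW jW; apply/eq_in_map => -[k|] kW; last by rewrite !sd_leaf_centre eq_s.
have neq_ik : i != k by apply: contraNneq iW => ->.
have neq_jk : j != k by apply: contraNneq jW => ->.
by rewrite !sd_leaf_leaf // eq_s.
Qed.

(* Hence a resolving set misses at most one leaf of each sign, so it has at
   least n - 2 elements. *)
Lemma resolving_size (W : seq (option 'I_n)) :
  resolving (star_adj n) (star_sign s) W -> (n - 2 <= size W)%N.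
Proof.
move=> [uniq_W resolves].
pose missed := [set i | Some i \notin W].
have sign_inj : {in missed &, injective (fun i => s i == 1)}.
  move=> i j; rewrite !inE => iW jW eq_sign; apply/eqP/negPn/negP => neq_ij.
  have eq_s : s i = s j by case: (s_sign i) (s_sign j) eq_sign => -> [] ->.
  apply: (resolves (Some i) (Some j)); first by rewrite (inj_eq Some_inj).
  exact: twin_leaves.
have missed_le2 : (#|missed| <= 2)%N.
  rewrite -(card_in_imset sign_inj).
  by apply: leq_trans (max_card _) _; rewrite card_bool.
have hit_leW : (#|~: missed| <= size W)%N.
  rewrite -(card_imset _ (@Some_inj _)) -(card_uniqP uniq_W).
  apply/subset_leq_card/subsetP => x /imsetP[i]; rewrite !inE negbK => iW ->.
  exact: iW.
by rewrite leq_subLR -[n in (n <= _)%N]card_ord -(cardsC missed) leq_add.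
Qed.

(* All leaves but a positive i0 and a negative j0 form a resolving set;
   k0 is a further leaf, which exists as soon as n >= 3. *)
Lemma star_resolving i0 j0 k0 :
  s i0 = 1 -> s j0 = -1 -> k0 != i0 -> k0 != j0 ->
  resolving (star_adj n) (star_sign s)
    [seq Some k | k <- enum [set k | (k != i0) && (k != j0)]].
Proof.
move=> pos_i0 neg_j0 neq_k0i0 neq_k0j0.
set S := [set k | (k != i0) && (k != j0)].
have k0S : k0 \in S by rewrite inE neq_k0i0.
split; first by rewrite map_inj_uniq ?enum_uniq //; apply: Some_inj.
move=> u v /eqP neq_uv eq_rep; apply: neq_uv.
have eq_at k : k \in S -> sd u (Some k) = sd v (Some k).
  by move=> kS; apply: (proj2 (eq_in_map _ _ _) eq_rep); rewrite map_f ?mem_enum.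
(* a vertex of W is the only vertex with a zero coordinate *)
have at_W k : k \in S -> (u == Some k) = (v == Some k).
  move=> kS; have := eq_at k kS.
  case: (eqVneq u (Some k)) => [->|neq_u]; case: (eqVneq v (Some k)) => [->|neq_v] //.
  - by rewrite sd_self => /esym/eqP; rewrite (negbTE (sd_neq0 neq_v)).
  - by rewrite sd_self => /eqP; rewrite (negbTE (sd_neq0 neq_u)).
have in_W_or_outside x :
    (exists2 k, k \in S & x = Some k) \/ x \in [:: None; Some i0; Some j0].
  case: x => [k|]; last by right; rewrite inE.
  have [kS|kNS] := boolP (k \in S); first by left; exists k.
  right; move: kNS; rewrite !inE negb_and !negbK.
  by case/orP => /eqP->; rewrite eqxx ?orbT.
case: (in_W_or_outside u) => [[k kS eq_u]|u_out].
  by move: (at_W k kS); rewrite eq_u eqxx => /esym/eqP->.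
case: (in_W_or_outside v) => [[k kS eq_v]|v_out].
  by move: (at_W k kS); rewrite eq_v eqxx => /eqP->.
(* c, i0, j0 have the distinct coordinates s k0, 2 s k0, -2 s k0 at k0 *)
have coord_c : sd None (Some k0) = s k0 by rewrite sd_centre_leaf.
have coord_i0 : sd (Some i0) (Some k0) = s k0 * 2.
  by rewrite sd_leaf_leaf 1?eq_sym // pos_i0 mul1r.
have coord_j0 : sd (Some j0) (Some k0) = - (s k0 * 2).
  by rewrite sd_leaf_leaf 1?eq_sym // neg_j0 mulN1r mulNr.
move: u_out v_out (eq_at k0 k0S); rewrite !inE.
by case/or3P=> /eqP-> /or3P[] /eqP->; rewrite ?coord_c ?coord_i0 ?coord_j0 //;
  case: (s_sign k0) => ->.
Qed.

End SignedStar.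

Theorem theorem2p9 (n : nat) (s : 'I_n -> int) :
  (3 <= n)%N ->
  (forall i, s i = 1 \/ s i = -1) ->
  (exists i, s i = 1) -> (exists j, s j = -1) ->
  is_metric_dim (star_adj n) (star_sign s) (n - 2)%N.
Proof.
move=> n_ge3 s_sign [i0 pos_i0] [j0 neg_j0].
split; last exact: resolving_size.
have neq_i0j0 : i0 != j0 by apply: contra_eqN pos_i0 => /eqP->; rewrite neg_j0.
pose S := [set k | (k != i0) && (k != j0)].
have card_S : #|S| = (n - 2)%N.
  have -> : S = ~: [set i0; j0] by apply/setP => k; rewrite !inE negb_or.
  by rewrite cardsCs setCK cards2 neq_i0j0 card_ord.
have [k0 k0S] : exists k0, k0 \in S.
  by apply/set0Pn; rewrite -card_gt0 card_S subn_gt0.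
move: k0S; rewrite inE => /andP[neq_k0i0 neq_k0j0].
exists [seq Some k | k <- enum S].
by split; [exact: star_resolving neq_k0i0 neq_k0j0 | rewrite size_map -cardE].
Qed.
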